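(* (1) A field $F$ is $n$-torsion clean if and only if $F$ is finite and $n=|F|-1$. (2) A finite product of finite fields $\mathbb{F}_{p_1^{k_1}}\times\cdots\times\mathbb{F}_{p_t^{k_t}}$ is $n$-torsion clean, where $n=\mathrm{LCM}(p_1^{k_1}-1,\ldots,p_t^{k_t}-1)$. (3) A product $\prod_{i\in I}F_i$ of fields is $n$-torsion clean if and only if all fields $F_i$, $i\in I$, are finite and $\mathrm{LCM}(|F_i|-1\mid i\in I)$ exists and equals $n$. (4) Let $R$ be a subdirect product of fields $F_i$, $i\in I$. Then $R$ is $n$-torsion clean if and only if $\prod_{i\in I}F_i$ is $n$-torsion clean.
   Context: All rings are associative with identity; $\mathbb{F}_m$ denotes the field with $m$ elements. A ring $R$ is $n$-torsion clean if every $r\in R$ can be written $r=e+u$ with $e^2=e$, $u$ a unit, $u^n=1$, and $n$ is the smallest natural number with this property. $\mathrm{LCM}(|F_i|-1\mid i\in I)$ exists means the set $\{|F_i|-1\mid i\in I\}$ has a least common multiple in $\mathbb{N}$. *)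

From HB Require Import structures.
From mathcomp Require Import all_boot all_algebra.
From mathcomp Require Import boolp.

Set Implicit Arguments.
Unset Strict Implicit.
Unset Printing Implicit Defensive.
Import GRing.Theory.
Local Open Scope ring_scope.

Definition dprod (I : Type) (F : I -> pzRingType) : Type := forall i, F i.

Section DProd.
Variables (I : Type) (F : I -> pzRingType).
Local Notation P := (dprod F).

HB.instance Definition _ := gen_eqMixin P.
HB.instance Definition _ := gen_choiceMixin P.

Definition dprod_zero : P := fun i => 0.
Definition dprod_opp (x : P) : P := fun i => - x i.
Definition dprod_add (x y : P) : P := fun i => x i + y i.
Definition dprod_one : P := fun i => 1.
Definition dprod_mul (x y : P) : P := fun i => x i * y i.

Lemma dprod_addA : associative dprod_add.
Proof. by move=> x y z; apply: functional_extensionality_dep => i; rewrite /dprod_add addrA. Qed.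
Lemma dprod_addC : commutative dprod_add.
Proof. by move=> x y; apply: functional_extensionality_dep => i; rewrite /dprod_add addrC. Qed.
Lemma dprod_add0 : left_id dprod_zero dprod_add.
Proof. by move=> x; apply: functional_extensionality_dep => i; rewrite /dprod_add add0r. Qed.
Lemma dprod_addN : left_inverse dprod_zero dprod_opp dprod_add.
Proof. by move=> x; apply: functional_extensionality_dep => i; rewrite /dprod_add /dprod_opp addNr. Qed.

HB.instance Definition _ :=
  GRing.isZmodule.Build P dprod_addA dprod_addC dprod_add0 dprod_addN.

Lemma dprod_mulA : associative dprod_mul.
Proof. by move=> x y z; apply: functional_extensionality_dep => i; rewrite /dprod_mul mulrA. Qed.
Lemma dprod_mul1 : left_id dprod_one dprod_mul.
Proof. by move=> x; apply: functional_extensionality_dep => i; rewrite /dprod_mul mul1r. Qed.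
Lemma dprod_mulr1 : right_id dprod_one dprod_mul.
Proof. by move=> x; apply: functional_extensionality_dep => i; rewrite /dprod_mul mulr1. Qed.
Lemma dprod_mulDl : left_distributive dprod_mul +%R.
Proof. by move=> x y z; apply: functional_extensionality_dep => i; rewrite /dprod_mul /= /dprod_add mulrDl. Qed.
Lemma dprod_mulDr : right_distributive dprod_mul +%R.
Proof. by move=> x y z; apply: functional_extensionality_dep => i; rewrite /dprod_mul /= /dprod_add mulrDr. Qed.

HB.instance Definition _ := GRing.Zmodule_isPzRing.Build P
  dprod_mulA dprod_mul1 dprod_mulr1 dprod_mulDl dprod_mulDr.

End DProd.

Definition dproj (I : Type) (F : I -> pzRingType) (i : I) (x : dprod F) : F i := x i.

Definition is_unit_of (R : pzRingType) (u : R) : Prop :=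
  exists v : R, u * v = 1 /\ v * u = 1.

Definition torsion_clean_exp (R : pzRingType) (n : nat) : Prop :=
  forall r : R, exists (e u : R),
    e * e = e /\ is_unit_of u /\ u ^+ n = 1 /\ r = e + u.

Definition n_torsion_clean (R : pzRingType) (n : nat) : Prop :=
  (0 < n)%N /\ torsion_clean_exp R n /\
  forall m : nat, (0 < m)%N -> torsion_clean_exp R m -> (n <= m)%N.

Definition has_card (T : eqType) (k : nat) : Prop :=
  exists s : seq T, uniq s /\ (forall x : T, x \in s) /\ size s = k.

Definition is_finite_type (T : eqType) : Prop := exists k, has_card T k.

Definition lcm_of_set_is (S : nat -> Prop) (n : nat) : Prop :=
  (0 < n)%N /\ (forall m, S m -> (m %| n)%N) /\
  (forall k, (0 < k)%N -> (forall m, S m -> (m %| k)%N) -> (n <= k)%N).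

From HB Require Import structures.
From mathcomp Require Import all_boot all_algebra all_field.
From mathcomp Require Import boolp.
From mathcomp Require Import zify.

(* In a field the only idempotents are 0 and 1, so F is m-torsion clean exactly
   when every x satisfies x^m = 1 or (x - 1)^m = 1.  Counting roots of
   (X^m - 1)((X - 1)^m - 1) shows that F is finite, and the same count with
   gcd(m, |F| - 1) in place of m forces |F| - 1 to divide m; conversely Fermat's
   little theorem shows that this divisibility suffices.  In a subring R of a
   product of fields that maps onto every factor, if every nonzero component
   satisfies x^m = 1 then e = 1 - r^m is an idempotent of R with (r - e)^m = 1.
   Hence R and the full product are m-torsion clean for the same m, namely the
   common multiples of the |F_i| - 1, and the least of them is their lcm. *)

Set Implicit Arguments.
Unset Strict Implicit.
Unset Printing Implicit Defensive.
Import GRing.Theory.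
Local Open Scope ring_scope.

Section TorsionCleanRing.
Variable R : pzRingType.

Lemma is_unit_of_expr_eq1 (u : R) m : (0 < m)%N -> u ^+ m = 1 -> is_unit_of u.
Proof.
move=> m_gt0 um1; exists (u ^+ m.-1).
by rewrite -exprS -exprSr prednK.
Qed.

Lemma torsion_clean_expP m : (0 < m)%N ->
  torsion_clean_exp R m <-> forall r : R, exists2 e : R, e * e = e & (r - e) ^+ m = 1.
Proof.
move=> m_gt0; split=> [tc r | shift r].
  by have [e [u [e_idem [_ [um1 ->]]]]] := tc r; exists e; rewrite // [e + u]addrC addrK.
have [e e_idem rem1] := shift r; exists e, (r - e).
by do !split => //; [exact: is_unit_of_expr_eq1 rem1 | rewrite addrC subrK].
Qed.

Lemma torsion_clean_exp_surj (S : pzRingType) (f : {rmorphism R -> S}) m :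
  (forall y : S, exists r : R, f r = y) ->
  torsion_clean_exp R m -> torsion_clean_exp S m.
Proof.
move=> f_surj tc y; have [r <-] := f_surj y.
have [e [u [e_idem [[v [uv vu]] [um1 ->]]]]] := tc r.
exists (f e), (f u); rewrite -rmorphM e_idem -rmorphXn um1 rmorph1 rmorphD.
by split=> //; split=> //; exists (f v); rewrite -!rmorphM uv vu rmorph1.
Qed.

End TorsionCleanRing.

Lemma eq_n_torsion_clean (R S : pzRingType) :
  (forall m, (0 < m)%N -> torsion_clean_exp R m <-> torsion_clean_exp S m) ->
  forall n, n_torsion_clean R n <-> n_torsion_clean S n.
Proof.
move=> RS n; split=> -[n_gt0 [tc n_min]]; split=> //; split; first exact/RS.
- by move=> m m_gt0 /(RS _ m_gt0); apply: n_min.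
- exact/RS.
- by move=> m m_gt0 /(RS _ m_gt0); apply: n_min.
Qed.

Lemma n_torsion_clean_lcm (R : pzRingType) (A : Prop) (S : nat -> Prop) :
  (forall m, (0 < m)%N ->
     torsion_clean_exp R m <-> A /\ forall k, S k -> (k %| m)%N) ->
  forall n, n_torsion_clean R n <-> A /\ lcm_of_set_is S n.
Proof.
move=> tcE n; split=> [[n_gt0 [/(tcE _ n_gt0) [a S_dvd] n_min]] | [a [n_gt0 [S_dvd n_min]]]].
  by split=> //; split=> //; split=> // k k_gt0 S_dvd_k; apply/n_min/tcE.
split=> //; split; first exact/tcE.
by move=> m m_gt0 /(tcE _ m_gt0) [_]; apply: n_min.
Qed.

Lemma has_card_eq (T : eqType) k k' : has_card T k -> has_card T k' -> k = k'.
Proof.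
move=> [s [s_uniq [s_full <-]]] [s' [s'_uniq [s'_full <-]]].
by apply/perm_size/uniq_perm => // x; rewrite s_full s'_full.
Qed.

Lemma has_card_finType (T : finType) : has_card T #|T|.
Proof. by exists (enum T); rewrite enum_uniq cardE; do !split; move=> // x; rewrite mem_enum. Qed.

Lemma bounded_uniq_finite (T : eqType) b :
  (forall s : seq T, uniq s -> (size s <= b)%N) -> is_finite_type T.
Proof.
move=> size_le; apply: contrapT => T_infinite.
suff [s [s_uniq size_s]] : exists s : seq T, uniq s /\ size s = b.+1.
  by have := size_le s s_uniq; rewrite size_s ltnn.
elim: b.+1 => [|k [s [s_uniq <-]]]; first by exists [::].
have [x /negP x_notin_s] : exists x, ~ x \in s.
  by apply/existsNP => s_full; apply: T_infinite; exists (size s), s.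
by exists (x :: s); rewrite /= x_notin_s.
Qed.

Lemma expr_gcdn_eq1 (R : pzRingType) (x : R) m n :
  x ^+ m = 1 -> x ^+ n = 1 -> x ^+ gcdn m n = 1.
Proof.
case: m => [|m] xm1 xn1; first by rewrite gcd0n.
have [a _ /divnK gcd_eq] := Bezoutl n (ltn0Sn m).
have : x ^+ (gcdn m.+1 n + a * n) = x ^+ ((gcdn m.+1 n + a * n) %/ m.+1 * m.+1).
  by rewrite gcd_eq.
rewrite exprD [(a * n)%N]mulnC exprM xn1 expr1n mulr1 => ->.
by rewrite mulnC exprM xm1 expr1n.
Qed.

Section FiniteField.
Variables (F : fieldType) (s : seq F).
Hypotheses (s_uniq : uniq s) (s_full : forall x, x \in s).

Let s_enum : Finite.axiom s := Finite.uniq_enumP s_uniq (fun x => s_full x).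

(* A copy of [F] made a [finFieldType] by [s], so that [expf_card] applies. *)
Definition fin_field_of_seq : predArgType := F.
HB.instance Definition _ := GRing.Field.on fin_field_of_seq.
HB.instance Definition _ := isCountable.Build fin_field_of_seq (@fin_pickleK F s s_enum).
HB.instance Definition _ := isFinite.Build fin_field_of_seq s_enum.

Lemma expf_size_pred (x : F) : x != 0 -> x ^+ (size s).-1 = 1.
Proof.
move=> x_neq0.
have card_s : #|fin_field_of_seq| = size s by rewrite cardT enumT unlock.
have := @expf_card _ (x : fin_field_of_seq); rewrite card_s.
case: (size s) => [|k] /=; first by rewrite expr0.
by rewrite exprS => x_pow; apply: (mulfI x_neq0); rewrite mulr1.
Qed.

End FiniteField.

Section Field.
Variable F : fieldType.

Lemma has_card_expf q (x : F) : has_card F q -> x != 0 -> x ^+ q.-1 = 1.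
Proof. by move=> [s [s_uniq [s_full <-]]]; apply: expf_size_pred. Qed.

Lemma has_card_expf_dvd q m (x : F) :
  has_card F q -> (q.-1 %| m)%N -> x != 0 -> x ^+ m = 1.
Proof. by move=> q_card /dvdnP [k ->] x_neq0; rewrite mulnC exprM has_card_expf // expr1n. Qed.

Lemma has_card_field_gt1 q : has_card F q -> (1 < q)%N.
Proof.
move=> [s [s_uniq [s_full <-]]]; apply: (@uniq_leq_size _ [:: 0; 1]) => //=.
by rewrite inE eq_sym oner_eq0.
Qed.

Lemma idempotent_field (e : F) : e * e = e -> e = 0 \/ e = 1.
Proof.
move=> e_idem; have : e * (e - 1) == 0 by rewrite mulrBr mulr1 e_idem subrr.
by rewrite mulf_eq0 subr_eq0 => /orP[] /eqP; [left | right].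
Qed.

Lemma size_unity_or_shifted_unity_roots d (s : seq F) : (0 < d)%N -> uniq s ->
  (forall x, x \in s -> x ^+ d = 1 \/ (x - 1) ^+ d = 1) -> (size s <= 2 * d)%N.
Proof.
move=> d_gt0 s_uniq s_roots.
pose p : {poly F} := ('X^d - 1) * (('X - 1) ^+ d - 1).
have size_shifted : size (('X - 1) ^+ d - 1 : {poly F}) = d.+1.
  by rewrite -polyC1 size_polyDl size_exp_XsubC // size_polyN size_polyC oner_neq0.
have size_unity : size ('X^d - 1 : {poly F}) = d.+1 by rewrite -polyC1 size_XnsubC.
have unity_neq0 : ('X^d - 1 : {poly F}) != 0 by rewrite -size_poly_eq0 size_unity.
have shifted_neq0 : (('X - 1) ^+ d - 1 : {poly F}) != 0.
  by rewrite -size_poly_eq0 size_shifted.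
have size_p : size p = (2 * d).+1.
  by rewrite size_mul // size_unity size_shifted; lia.
rewrite -ltnS -size_p; apply: max_poly_roots => //; first by rewrite -size_poly_eq0 size_p.
apply/allP => x /s_roots; rewrite rootM !rootE !hornerE.
by case=> ->; rewrite subrr eqxx ?orbT.
Qed.

Lemma torsion_clean_exp_field_roots m : (0 < m)%N -> torsion_clean_exp F m ->
  forall x : F, x ^+ m = 1 \/ (x - 1) ^+ m = 1.
Proof.
move=> m_gt0 /(torsion_clean_expP _ m_gt0) shift x; have [e /idempotent_field] := shift x.
by case=> ->; rewrite ?subr0; [left | right].
Qed.

Lemma torsion_clean_exp_field_card m : (0 < m)%N -> torsion_clean_exp F m ->
  exists2 q, has_card F q & (q.-1 %| m)%N.
Proof.
move=> m_gt0 tc; have roots := torsion_clean_exp_field_roots m_gt0 tc.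
have [q [s [s_uniq [s_full size_s]]]] : is_finite_type F.
  apply: (@bounded_uniq_finite _ (2 * m)) => s s_uniq.
  exact: size_unity_or_shifted_unity_roots.
have q_gt1 : (1 < q)%N by apply: has_card_field_gt1; exists s.
exists q; first by exists s.
pose d := gcdn m q.-1.
have d_gt0 : (0 < d)%N by rewrite gcdn_gt0 m_gt0.
have d_roots (x : F) : x ^+ d = 1 \/ (x - 1) ^+ d = 1.
  have powq (y : F) : y ^+ m = 1 -> y ^+ q.-1 = 1.
    move=> ym1; apply: has_card_expf; first by exists s.
    by apply: contraTneq (introT eqP ym1) => ->; rewrite expr0n gtn_eqF // eq_sym oner_eq0.
  by case: (roots x) => /[dup] ? /powq ?; [left | right]; apply: expr_gcdn_eq1.
have q_le : (q <= 2 * d)%N.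
  by rewrite -size_s; apply: size_unity_or_shifted_unity_roots => // x _; apply: d_roots.
have [k q_eq] : exists k, q.-1 = (k * d)%N by apply/dvdnP/dvdn_gcdr.
have : (k * d < 2 * d)%N by lia.
rewrite ltn_pmul2r // => k_lt2.
have -> : q.-1 = d by case: k k_lt2 q_eq => [|[|]] //; lia.
exact: dvdn_gcdl.
Qed.

Lemma complement_expr_shift m (x : F) : (0 < m)%N ->
  (forall y : F, y != 0 -> y ^+ m = 1) ->
  (1 - x ^+ m) * (1 - x ^+ m) = 1 - x ^+ m /\ (x - (1 - x ^+ m)) ^+ m = 1.
Proof.
move=> m_gt0 expf; have [-> | x_neq0] := eqVneq x 0.
  by rewrite expr0n gtn_eqF // subr0 mulr1 sub0r expf ?oppr_eq0 ?oner_eq0.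
by rewrite expf // subrr mulr0 subr0 expf.
Qed.

Lemma torsion_clean_exp_field_of_expf m : (0 < m)%N ->
  (forall x : F, x != 0 -> x ^+ m = 1) -> torsion_clean_exp F m.
Proof.
move=> m_gt0 expf; apply/torsion_clean_expP => // x.
by have [? ?] := complement_expr_shift x m_gt0 expf; exists (1 - x ^+ m).
Qed.

Lemma torsion_clean_exp_fieldE m : (0 < m)%N ->
  torsion_clean_exp F m <-> forall x : F, x != 0 -> x ^+ m = 1.
Proof.
move=> m_gt0; split; last exact: torsion_clean_exp_field_of_expf.
move=> /(torsion_clean_exp_field_card m_gt0) [q q_card q_dvd] x.
exact: has_card_expf_dvd q_card q_dvd.
Qed.

Lemma torsion_clean_exp_field_cardE m : (0 < m)%N ->
  torsion_clean_exp F m <-> exists2 q, has_card F q & (q.-1 %| m)%N.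
Proof.
move=> m_gt0; split; first exact: torsion_clean_exp_field_card.
move=> [q q_card q_dvd]; apply/torsion_clean_exp_fieldE => // x.
exact: has_card_expf_dvd q_card q_dvd.
Qed.

Lemma torsion_clean_exp_field_card_pred q : has_card F q -> torsion_clean_exp F q.-1.
Proof.
move=> q_card; have q_gt1 := has_card_field_gt1 q_card.
by apply/torsion_clean_exp_field_cardE; [lia | exists q].
Qed.

End Field.

HB.instance Definition _ (I : Type) (F : I -> pzRingType) (i : I) :=
  GRing.isZmodMorphism.Build (dprod F) (F i) (dproj i) (fun _ _ => erefl).
HB.instance Definition _ (I : Type) (F : I -> pzRingType) (i : I) :=
  GRing.isMonoidMorphism.Build (dprod F) (F i) (dproj i) (erefl, fun _ _ => erefl).

Lemma dproj_surj (I : Type) (F : I -> pzRingType) (i : I) (y : F i) :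
  exists x : dprod F, dproj i x = y.
Proof.
exists (fun j => if pselect (i = j) is left ij then eq_rect i F y j ij else 0).
rewrite /dproj; case: pselect => [ii | //].
by rewrite (Prop_irrelevance ii erefl).
Qed.

Section Subdirect.
Variables (I : Type) (F : I -> fieldType) (R : pzRingType).
Variable f : {rmorphism R -> dprod (fun i => (F i : pzRingType))}.

Lemma torsion_clean_exp_subdirect_proj m :
  (forall i (y : F i), exists r, f r i = y) ->
  torsion_clean_exp R m -> forall i, torsion_clean_exp (F i) m.
Proof.
by move=> f_surj tc i; apply: (@torsion_clean_exp_surj _ _ (dproj i \o f) m (f_surj i) tc).
Qed.

Lemma torsion_clean_exp_subdirect_of_expf m : injective f -> (0 < m)%N ->
  (forall i (x : F i), x != 0 -> x ^+ m = 1) -> torsion_clean_exp R m.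
Proof.
move=> f_inj m_gt0 expf; apply/torsion_clean_expP => // r.
have f_eq a b : (forall i, (dproj i \o f) a = (dproj i \o f) b) -> a = b.
  by move=> ab; apply/f_inj/functional_extensionality_dep.
(* The idempotent has to live in [R]; componentwise it is 1 exactly where [r] vanishes. *)
exists (1 - r ^+ m); apply: f_eq => i; rewrite ?(rmorphM, rmorphB, rmorph1, rmorphXn);
  by have [] := complement_expr_shift ((dproj i \o f) r) m_gt0 (expf i).
Qed.

Lemma torsion_clean_exp_subdirect m : injective f ->
  (forall i (y : F i), exists r, f r i = y) -> (0 < m)%N ->
  torsion_clean_exp R m <-> forall i, torsion_clean_exp (F i) m.
Proof.
move=> f_inj f_surj m_gt0; split; first exact: torsion_clean_exp_subdirect_proj.
move=> tc; apply: torsion_clean_exp_subdirect_of_expf => // i.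
exact/torsion_clean_exp_fieldE.
Qed.

End Subdirect.

Section Product.
Variables (I : Type) (F : I -> fieldType).
Local Notation P := (dprod (fun i => (F i : pzRingType))).

Lemma torsion_clean_exp_prod m : (0 < m)%N ->
  torsion_clean_exp P m <-> forall i, torsion_clean_exp (F i) m.
Proof. by apply: (@torsion_clean_exp_subdirect _ _ _ idfun) => // i; apply: dproj_surj. Qed.

Lemma torsion_clean_exp_prod_card m : (0 < m)%N ->
  torsion_clean_exp P m <->
  (forall i, is_finite_type (F i)) /\
  forall k, (exists i q, has_card (F i) q /\ k = q.-1) -> (k %| m)%N.
Proof.
move=> m_gt0; rewrite torsion_clean_exp_prod //; split=> [tc | [F_fin dvd_m] i].
  split=> [i | _ [i [q [q_card ->]]]].
    by have [q q_card _] := (torsion_clean_exp_field_cardE _ m_gt0).1 (tc i); exists q.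
  have [q' q'_card] := (torsion_clean_exp_field_cardE _ m_gt0).1 (tc i).
  by rewrite (has_card_eq q_card q'_card).
have [q q_card] := F_fin i.
by apply/torsion_clean_exp_field_cardE => //; exists q => //; apply: dvd_m; exists i, q.
Qed.

End Product.

Lemma lcm_of_set_biglcmn (J : finType) (a : J -> nat) : (forall j, 0 < a j)%N ->
  lcm_of_set_is (fun k => exists j, k = a j) (\big[lcmn/1%N]_j a j).
Proof.
move=> a_gt0; split; last split.
- by elim/big_ind: _ => // x y x_gt0 y_gt0; rewrite lcmn_gt0 x_gt0.
- by move=> _ [j ->]; apply: biglcmn_sup.
- move=> k k_gt0 dvd_k; apply: dvdn_leq k_gt0 _.
  by apply/dvdn_biglcmP => j _; apply: dvd_k; exists j.
Qed.

Lemma n_torsion_clean_field (F : fieldType) (n : nat) :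
  n_torsion_clean F n <-> exists k, has_card F k /\ n = k.-1.
Proof.
split=> [[n_gt0 [tc n_min]] | [q [q_card ->]]].
  have [q q_card q_dvd] := (torsion_clean_exp_field_cardE _ n_gt0).1 tc.
  exists q; split=> //; apply/eqP; rewrite eqn_leq (dvdn_leq n_gt0 q_dvd) andbT.
  apply: n_min; last exact: torsion_clean_exp_field_card_pred.
  by have := has_card_field_gt1 q_card; lia.
have q_gt1 := has_card_field_gt1 q_card.
split; first by lia.
split; first exact: torsion_clean_exp_field_card_pred.
move=> m m_gt0 /(torsion_clean_exp_field_cardE _ m_gt0) [q' q'_card].
by rewrite (has_card_eq q'_card q_card); apply: dvdn_leq.
Qed.

Lemma n_torsion_clean_prod (I : Type) (F : I -> fieldType) (n : nat) :
  n_torsion_clean (dprod (fun i => (F i : pzRingType))) n <->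
  ((forall i, is_finite_type (F i)) /\
   lcm_of_set_is (fun m => exists i k, has_card (F i) k /\ m = k.-1) n).
Proof. by apply: n_torsion_clean_lcm => m; apply: torsion_clean_exp_prod_card. Qed.

Lemma n_torsion_clean_finite_prod (t : nat) (F : 'I_t -> finFieldType) :
  n_torsion_clean (dprod (fun i => (F i : pzRingType)))
                  (\big[lcmn/1%N]_(i < t) #|F i|.-1).
Proof.
apply/(n_torsion_clean_prod (fun i => (F i : fieldType))).
split=> [i | ]; first by exists #|F i|; apply: has_card_finType.
have -> : (fun m => exists i k, has_card (F i) k /\ m = k.-1) =
          (fun m => exists i, m = #|F i|.-1).
  apply/funext => m; apply/propext; split=> [[i [k [k_card ->]]] | [i ->]].
    by exists i; rewrite (has_card_eq k_card (has_card_finType (F i))).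
  by exists i, #|F i|; split=> //; apply: has_card_finType.
apply: lcm_of_set_biglcmn => i.
by have := has_card_field_gt1 (has_card_finType (F i)); case: #|F i|.
Qed.

Lemma n_torsion_clean_subdirect (I : Type) (F : I -> fieldType) (R : pzRingType)
    (f : {rmorphism R -> dprod (fun i => (F i : pzRingType))}) :
  injective f -> (forall i (y : F i), exists r : R, f r i = y) ->
  forall n, n_torsion_clean R n <-> n_torsion_clean (dprod (fun i => (F i : pzRingType))) n.
Proof.
move=> f_inj f_surj; apply: eq_n_torsion_clean => m m_gt0.
by rewrite torsion_clean_exp_prod // (torsion_clean_exp_subdirect f_inj f_surj).
Qed.

Theorem proposition2p8 :
  (* (1) *)
  (forall (F : fieldType) (n : nat),
      n_torsion_clean F n <-> exists k, has_card F k /\ n = k.-1)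
  /\
  (* (2) *)
  (forall (t : nat) (F : 'I_t -> finFieldType),
      n_torsion_clean (dprod (fun i => (F i : pzRingType)))
                      (\big[lcmn/1%N]_(i < t) #|F i|.-1))
  /\
  (* (3) *)
  (forall (I : Type) (F : I -> fieldType) (n : nat),
      n_torsion_clean (dprod (fun i => (F i : pzRingType))) n <->
      ((forall i, is_finite_type (F i)) /\
       lcm_of_set_is (fun m => exists i k, has_card (F i) k /\ m = k.-1) n))
  /\
  (* (4) *)
  (forall (I : Type) (F : I -> fieldType) (R : pzRingType)
          (f : {rmorphism R -> dprod (fun i => (F i : pzRingType))}),
      injective f ->
      (forall i, forall y : F i, exists r : R, f r i = y) ->
      forall n : nat,
        n_torsion_clean R n <->
        n_torsion_clean (dprod (fun i => (F i : pzRingType))) n).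
Proof.
split; first exact: n_torsion_clean_field.
split; first exact: n_torsion_clean_finite_prod.
split; first exact: n_torsion_clean_prod.
exact: n_torsion_clean_subdirect.
Qed.
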